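(* Let $\lambda\in\mathbb{C}\setminus(\mathbb{R}\cup S^1)$, $\mu\in\mathbb{C}\setminus\{0,1\}$, and $a,b\in\mathbb{C}^n$ with $a\neq b$. Let $G$ be the group generated by $f=(a,\lambda)$ and $g=(b,\mu)$, and let $L=\mathbb{C}(b-a)+a=\{a+t(b-a):t\in\mathbb{C}\}$. Then $\overline{G_1(z)}=L$ for every $z\in L$; in particular $\overline{G(z)}=L$ for every $z\in L$.
   Context: $S^1=\{z\in\mathbb{C}:|z|=1\}$. For $c\in\mathbb{C}^n$ and $\nu\in\mathbb{C}\setminus\{0,1\}$, $(c,\nu)$ denotes the map $z\mapsto\nu(z-c)+c$ of $\mathbb{C}^n$. $G_1$ is the set of translations $z\mapsto z+v$ belonging to $G$, and $G_1(z)=\{T(z):T\in G_1\}$; $G(z)=\{h(z):h\in G\}$. *)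

From Stdlib Require Import Reals.
From Stdlib Require Fin.
Open Scope R_scope.

Definition Cx : Type := (R * R)%type.
Definition Cre (z : Cx) : R := fst z.
Definition Cim (z : Cx) : R := snd z.
Definition RtoC (r : R) : Cx := (r, 0).
Definition Cx0 : Cx := (0, 0).
Definition Cx1 : Cx := (1, 0).
Definition Cadd (z w : Cx) : Cx := (fst z + fst w, snd z + snd w).
Definition Copp (z : Cx) : Cx := (- fst z, - snd z).
Definition Csub (z w : Cx) : Cx := Cadd z (Copp w).
Definition Cmul (z w : Cx) : Cx :=
  (fst z * fst w - snd z * snd w, fst z * snd w + snd z * fst w).
Definition Cmod (z : Cx) : R := sqrt (fst z ^ 2 + snd z ^ 2).
Definition Cinv (z : Cx) : Cx :=
  (fst z / (fst z ^ 2 + snd z ^ 2), - snd z / (fst z ^ 2 + snd z ^ 2)).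

Definition Cn (n : nat) : Type := Fin.t n -> Cx.
Definition vadd {n} (z w : Cn n) : Cn n := fun i => Cadd (z i) (w i).
Definition vsub {n} (z w : Cn n) : Cn n := fun i => Csub (z i) (w i).
Definition vscal {n} (t : Cx) (z : Cn n) : Cn n := fun i => Cmul t (z i).

(* (c, nu) : z |-> nu (z - c) + c *)
Definition homot {n} (c : Cn n) (nu : Cx) : Cn n -> Cn n :=
  fun z => vadd (vscal nu (vsub z c)) c.

(* Since f, g are bijections with inverses (a, 1/lam), (b, 1/mu), the group
   they generate is the set of all finite compositions of f, f^-1, g, g^-1
   (including the empty composition = identity). *)
Inductive InGroup {n} (a b : Cn n) (lam mu : Cx) : (Cn n -> Cn n) -> Prop :=
| G_id : InGroup a b lam mu (fun z => z)
| G_f  : forall h, InGroup a b lam mu h ->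
           InGroup a b lam mu (fun z => homot a lam (h z))
| G_fi : forall h, InGroup a b lam mu h ->
           InGroup a b lam mu (fun z => homot a (Cinv lam) (h z))
| G_g  : forall h, InGroup a b lam mu h ->
           InGroup a b lam mu (fun z => homot b mu (h z))
| G_gi : forall h, InGroup a b lam mu h ->
           InGroup a b lam mu (fun z => homot b (Cinv mu) (h z)).

Definition InG1 {n} (a b : Cn n) (lam mu : Cx) (h : Cn n -> Cn n) : Prop :=
  InGroup a b lam mu h /\ exists v : Cn n, forall z, h z = vadd z v.

Definition orbitG {n} (a b : Cn n) (lam mu : Cx) (z : Cn n) (w : Cn n) : Prop :=
  exists h, InGroup a b lam mu h /\ h z = w.
Definition orbitG1 {n} (a b : Cn n) (lam mu : Cx) (z : Cn n) (w : Cn n) : Prop :=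
  exists h, InG1 a b lam mu h /\ h z = w.

(* topological closure in Cx^n (product / sup-norm topology = usual one) *)
Definition closure {n} (S : Cn n -> Prop) (w : Cn n) : Prop :=
  forall eps : R, eps > 0 ->
    exists s, S s /\ forall i, Cmod (Csub (w i) (s i)) < eps.

Definition line {n} (a b : Cn n) (w : Cn n) : Prop :=
  exists t : Cx, w = vadd a (vscal t (vsub b a)).

(* Every element of G maps the line L into itself, so orbits of points of L
   stay in L, and L is closed.  Conversely, the commutator f g f^-1 g^-1 is
   the translation by w0 (b - a) with w0 = (lam - 1)(1 - mu) <> 0, and
   conjugating a translation by s (b - a) with f^{+-1} gives the translation
   by lam^{+-1} s (b - a).  Hence the coefficients s of the translations in G
   form an additive subgroup of C containing w0 and stable under
   multiplication by rho = lam or 1/lam, chosen with |rho| < 1.  Since rho is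
   not real, rho^N w0 and rho^(N+1) w0 span a lattice whose fundamental domain
   shrinks to a point as N grows, so this subgroup is dense in C and G_1(z)
   is dense in L. *)

From Stdlib Require Import Reals Lra Psatz ZArith Classical FunctionalExtensionality.
From Coquelicot Require Complex.
Open Scope R_scope.

(* [Cx] and its operations are definitionally Coquelicot's [C]; its field
   structure and the properties of the modulus are inherited by conversion. *)
Definition Cdiv (x y : Cx) : Cx := Cmul x (Cinv y).

Lemma Cx_field : field_theory Cx0 Cx1 Cadd Cmul Csub Copp Cdiv Cinv (@eq Cx).
Proof. exact Complex.C_field_theory. Qed.

Add Field Cx_field : Cx_field.

Lemma Cmod_ge0 (z : Cx) : 0 <= Cmod z.
Proof. exact (Complex.Cmod_ge_0 z). Qed.

Lemma Cmod_gt0 (z : Cx) : z <> Cx0 -> 0 < Cmod z.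
Proof. exact (proj1 (Complex.Cmod_gt_0 z)). Qed.

Lemma Cmod_mul (z w : Cx) : Cmod (Cmul z w) = Cmod z * Cmod w.
Proof. exact (Complex.Cmod_mult z w). Qed.

Lemma Cmod_add_le (z w : Cx) : Cmod (Cadd z w) <= Cmod z + Cmod w.
Proof. exact (Complex.Cmod_triangle z w). Qed.

Lemma Cmod_RtoC (r : R) : Cmod (RtoC r) = Rabs r.
Proof. exact (Complex.Cmod_R r). Qed.

Lemma Cmod_inv (z : Cx) : z <> Cx0 -> Cmod (Cinv z) = / Cmod z.
Proof. exact (Complex.Cmod_inv z). Qed.

Lemma Cmod_opp (z : Cx) : Cmod (Copp z) = Cmod z.
Proof. exact (Complex.Cmod_opp z). Qed.

Lemma Cmod_eq0 (z : Cx) : (forall e, 0 < e -> Cmod z < e) -> z = Cx0.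
Proof.
  intro Hsmall; apply Complex.Cmod_eq_0.
  destruct (Cmod_ge0 z) as [Hpos | Hz]; [| now symmetry].
  specialize (Hsmall _ Hpos); lra.
Qed.

Lemma RtoC_add (x y : R) : RtoC (x + y) = Cadd (RtoC x) (RtoC y).
Proof. unfold RtoC, Cadd; simpl; f_equal; ring. Qed.

Lemma RtoC_sub (x y : R) : RtoC (x - y) = Csub (RtoC x) (RtoC y).
Proof. unfold RtoC, Csub, Cadd, Copp; simpl; f_equal; ring. Qed.

Lemma Cmul_neq0 (z w : Cx) : z <> Cx0 -> w <> Cx0 -> Cmul z w <> Cx0.
Proof. exact (Complex.Cmult_neq_0 z w). Qed.

Lemma Cim_inv_neq0 (z : Cx) : Cim z <> 0 -> Cim (Cinv z) <> 0.
Proof.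
  destruct z as [x y]; unfold Cim, Cinv; cbn [fst snd]; intros Hy E.
  assert (D : x ^ 2 + y ^ 2 <> 0) by nra.
  apply Hy; replace y with (- (- y / (x ^ 2 + y ^ 2)) * (x ^ 2 + y ^ 2)) by (field; exact D).
  rewrite E; ring.
Qed.

Lemma neq0_of_Cim_neq0 (z : Cx) : Cim z <> 0 -> z <> Cx0.
Proof. now intros Hz ->. Qed.

Lemma Rabs_sub_up (x : R) : Rabs (x - IZR (up x)) <= 1.
Proof. destruct (archimed x); unfold Rabs; destruct Rcase_abs; lra. Qed.

Lemma RtoC_Rbasis (rho u : Cx) : Cim rho <> 0 ->
  exists x y : R, u = Cadd (RtoC x) (Cmul (RtoC y) rho).
Proof.
  destruct rho as [r1 r2], u as [u1 u2]; unfold Cim; simpl; intro Hr2.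
  exists (u1 - u2 / r2 * r1), (u2 / r2).
  unfold Cadd, Cmul, RtoC; simpl; f_equal; field; exact Hr2.
Qed.

Lemma lattice_approx (rho om t : Cx) : Cim rho <> 0 -> om <> Cx0 ->
  exists m k : Z,
    Cmod (Csub t (Cadd (Cmul (RtoC (IZR m)) om) (Cmul (RtoC (IZR k)) (Cmul rho om))))
    <= (1 + Cmod rho) * Cmod om.
Proof.
  intros Hrho Hom.
  destruct (RtoC_Rbasis rho (Cdiv t om) Hrho) as [x [y Hxy]].
  exists (up x), (up y).
  replace (Csub t _)
    with (Cmul (Cadd (RtoC (x - IZR (up x))) (Cmul (RtoC (y - IZR (up y))) rho)) om).
  2: { assert (Ht : t = Cmul (Cdiv t om) om) by (field; exact Hom).
       rewrite Hxy in Ht; rewrite Ht, !RtoC_sub; ring. }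
  rewrite Cmod_mul; apply Rmult_le_compat_r; [apply Cmod_ge0 |].
  eapply Rle_trans; [apply Cmod_add_le |].
  rewrite Cmod_mul, !Cmod_RtoC.
  pose proof (Rabs_sub_up x); pose proof (Rabs_sub_up y).
  pose proof (Rabs_pos (y - IZR (up y))); pose proof (Cmod_ge0 rho).
  nra.
Qed.

Section DenseSubgroup.

Variable P : Cx -> Prop.
Hypothesis P_add : forall s t, P s -> P t -> P (Cadd s t).
Hypothesis P_opp : forall s, P s -> P (Copp s).

Lemma subgroup_intmul (w : Cx) (m : Z) : P w -> P (Cmul (RtoC (IZR m)) w).
Proof.
  intro Hw; induction m as [| m IHm | m IHm] using Z.peano_ind.
  - replace (Cmul (RtoC (IZR 0)) w) with (Cadd w (Copp w))
      by (change (RtoC (IZR 0)) with Cx0; ring).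
    auto.
  - rewrite succ_IZR, RtoC_add; change (RtoC 1) with Cx1.
    replace (Cmul _ w) with (Cadd (Cmul (RtoC (IZR m)) w) w) by ring.
    auto.
  - rewrite <- Z.sub_1_r, minus_IZR, RtoC_sub; change (RtoC 1) with Cx1.
    replace (Cmul _ w) with (Cadd (Cmul (RtoC (IZR m)) w) (Copp w)) by ring.
    auto.
Qed.

Variable rho : Cx.
Hypothesis P_mul_rho : forall s, P s -> P (Cmul rho s).
Hypothesis rho_nonreal : Cim rho <> 0.
Hypothesis rho_contracting : Cmod rho < 1.

Lemma subgroup_rho_pow (w0 : Cx) : P w0 -> w0 <> Cx0 -> forall N : nat,
  exists w, P w /\ w <> Cx0 /\ Cmod w = Cmod rho ^ N * Cmod w0.
Proof.
  intros Hw0 Hw0nz N; induction N as [| N [w [Hw [Hwnz Hmod]]]].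
  - exists w0; repeat split; auto; simpl; ring.
  - exists (Cmul rho w); repeat split; auto.
    + exact (Cmul_neq0 rho w (neq0_of_Cim_neq0 rho rho_nonreal) Hwnz).
    + rewrite Cmod_mul, Hmod; simpl; ring.
Qed.

Lemma subgroup_small (w0 : Cx) : P w0 -> w0 <> Cx0 -> forall e, 0 < e ->
  exists w, P w /\ w <> Cx0 /\ Cmod w < e.
Proof.
  intros Hw0 Hw0nz e He.
  pose proof (Cmod_gt0 w0 Hw0nz) as Hc.
  destruct (pow_lt_1_zero (Cmod rho)
              ltac:(rewrite Rabs_pos_eq by apply Cmod_ge0; exact rho_contracting)
              (e / Cmod w0) ltac:(apply Rdiv_lt_0_compat; lra)) as [N HN].
  specialize (HN N (le_n N)); rewrite Rabs_pos_eq in HN by (apply pow_le, Cmod_ge0).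
  destruct (subgroup_rho_pow w0 Hw0 Hw0nz N) as [w [Hw [Hwnz Hmod]]].
  exists w; repeat split; auto.
  rewrite Hmod.
  apply Rmult_lt_compat_r with (r := Cmod w0) in HN; [| exact Hc].
  replace (e / Cmod w0 * Cmod w0) with e in HN by (field; lra).
  exact HN.
Qed.

Lemma subgroup_dense (w0 : Cx) : P w0 -> w0 <> Cx0 -> forall t e, 0 < e ->
  exists s, P s /\ Cmod (Csub t s) < e.
Proof.
  intros Hw0 Hw0nz t e He.
  destruct (subgroup_small w0 Hw0 Hw0nz (e / 2) ltac:(lra)) as [om [Hom [Homnz Homsmall]]].
  destruct (lattice_approx rho om t rho_nonreal Homnz) as [m [k Hmk]].
  exists (Cadd (Cmul (RtoC (IZR m)) om) (Cmul (RtoC (IZR k)) (Cmul rho om))).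
  split; [apply P_add; apply subgroup_intmul; auto |].
  pose proof (Cmod_ge0 om); nra.
Qed.

End DenseSubgroup.

Lemma homot_invK {n} (c : Cn n) (nu : Cx) (x : Cn n) :
  nu <> Cx0 -> homot c (Cinv nu) (homot c nu x) = x.
Proof.
  intro Hnu; apply functional_extensionality; intro i.
  unfold homot, vadd, vscal, vsub; field; exact Hnu.
Qed.

Lemma homotK {n} (c : Cn n) (nu : Cx) (x : Cn n) :
  nu <> Cx0 -> homot c nu (homot c (Cinv nu) x) = x.
Proof.
  intro Hnu; apply functional_extensionality; intro i.
  unfold homot, vadd, vscal, vsub; field; exact Hnu.
Qed.

Section Group.

Context {n : nat} (a b : Cn n) (lam mu : Cx).
Hypothesis lam_neq0 : lam <> Cx0.
Hypothesis mu_neq0 : mu <> Cx0.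

Lemma InGroup_comp (h1 h2 : Cn n -> Cn n) :
  InGroup a b lam mu h1 -> InGroup a b lam mu h2 ->
  InGroup a b lam mu (fun z => h1 (h2 z)).
Proof.
  intros H1 H2; induction H1; [exact H2 | apply G_f | apply G_fi | apply G_g | apply G_gi];
    assumption.
Qed.

Lemma InGroup_inv (h : Cn n -> Cn n) : InGroup a b lam mu h ->
  exists h', InGroup a b lam mu h' /\ forall z, h' (h z) = z.
Proof.
  induction 1 as [| h _ [h' [H' E]] | h _ [h' [H' E]] | h _ [h' [H' E]] | h _ [h' [H' E]]].
  - exists (fun z => z); split; [constructor | reflexivity].
  - exists (fun z => h' (homot a (Cinv lam) z)); split.
    + apply InGroup_comp; [exact H' | apply G_fi, G_id].
    + intro z; rewrite homot_invK; auto.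
  - exists (fun z => h' (homot a lam z)); split.
    + apply InGroup_comp; [exact H' | apply G_f, G_id].
    + intro z; rewrite homotK; auto.
  - exists (fun z => h' (homot b (Cinv mu) z)); split.
    + apply InGroup_comp; [exact H' | apply G_gi, G_id].
    + intro z; rewrite homot_invK; auto.
  - exists (fun z => h' (homot b mu z)); split.
    + apply InGroup_comp; [exact H' | apply G_g, G_id].
    + intro z; rewrite homotK; auto.
Qed.

Definition transl_coef (s : Cx) : Prop :=
  exists h, InGroup a b lam mu h /\ forall z, h z = vadd z (vscal s (vsub b a)).

Lemma transl_coef_add (s t : Cx) :
  transl_coef s -> transl_coef t -> transl_coef (Cadd s t).
Proof.
  intros [h1 [H1 E1]] [h2 [H2 E2]].
  exists (fun z => h1 (h2 z)); split; [now apply InGroup_comp |].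
  intro z; rewrite E2, E1; apply functional_extensionality; intro i.
  unfold vadd, vscal, vsub; ring.
Qed.

Lemma transl_coef_opp (s : Cx) : transl_coef s -> transl_coef (Copp s).
Proof.
  intros [h [H E]]; destruct (InGroup_inv h H) as [h' [H' E']].
  exists h'; split; [exact H' | intro z].
  rewrite <- (E' (vadd z (vscal (Copp s) (vsub b a)))), E; f_equal.
  apply functional_extensionality; intro i; unfold vadd, vscal, vsub; ring.
Qed.

Lemma transl_coef_mul_lam (s : Cx) : transl_coef s -> transl_coef (Cmul lam s).
Proof.
  intros [h [H E]].
  exists (fun z => homot a lam (h (homot a (Cinv lam) z))); split.
  - apply G_f, InGroup_comp; [exact H | apply G_fi, G_id].
  - intro z; rewrite E; apply functional_extensionality; intro i.
    unfold homot, vadd, vscal, vsub; field; exact lam_neq0.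
Qed.

Lemma transl_coef_mul_invlam (s : Cx) : transl_coef s -> transl_coef (Cmul (Cinv lam) s).
Proof.
  intros [h [H E]].
  exists (fun z => homot a (Cinv lam) (h (homot a lam z))); split.
  - apply G_fi, InGroup_comp; [exact H | apply G_f, G_id].
  - intro z; rewrite E; apply functional_extensionality; intro i.
    unfold homot, vadd, vscal, vsub; field; exact lam_neq0.
Qed.

Lemma transl_coef_commutator :
  transl_coef (Cmul (Csub lam Cx1) (Csub Cx1 mu)).
Proof.
  exists (fun z => homot a lam (homot b mu (homot a (Cinv lam) (homot b (Cinv mu) z)))).
  split; [apply G_f, G_g, G_fi, G_gi, G_id |].
  intro z; apply functional_extensionality; intro i.
  unfold homot, vadd, vscal, vsub; field; split; assumption.
Qed.

End Group.

Lemma transl_coef_dense {n} (a b : Cn n) (lam mu : Cx) :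
  Cim lam <> 0 -> Cmod lam <> 1 -> mu <> Cx0 -> mu <> Cx1 ->
  forall t e, 0 < e -> exists s, transl_coef a b lam mu s /\ Cmod (Csub t s) < e.
Proof.
  intros Hlam_real Hlam_circ Hmu0 Hmu1.
  pose proof (neq0_of_Cim_neq0 lam Hlam_real) as Hlam0.
  assert (Hw0 : Cmul (Csub lam Cx1) (Csub Cx1 mu) <> Cx0).
  { apply Cmul_neq0.
    - apply neq0_of_Cim_neq0; unfold Cim, Csub, Cadd, Copp, Cx1 in *; simpl; lra.
    - intro E; apply Hmu1; replace mu with (Csub Cx1 (Csub Cx1 mu)) by ring.
      rewrite E; ring. }
  pose proof (transl_coef_add a b lam mu) as Hadd.
  pose proof (transl_coef_opp a b lam mu Hlam0 Hmu0) as Hopp.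
  pose proof (transl_coef_commutator a b lam mu Hlam0 Hmu0) as Hcomm.
  destruct (Rlt_or_le (Cmod lam) 1) as [Hlt | Hge].
  - exact (subgroup_dense _ Hadd Hopp lam (transl_coef_mul_lam a b lam mu Hlam0)
             Hlam_real Hlt _ Hcomm Hw0).
  - apply (subgroup_dense _ Hadd Hopp (Cinv lam) (transl_coef_mul_invlam a b lam mu Hlam0)
             (Cim_inv_neq0 lam Hlam_real)) with (w0 := Cmul (Csub lam Cx1) (Csub Cx1 mu));
      [| exact Hcomm | exact Hw0].
    rewrite Cmod_inv by exact Hlam0; rewrite <- Rinv_1.
    apply Rinv_1_lt_contravar; lra.
Qed.

Lemma line_homot_a {n} (a b : Cn n) (nu : Cx) (z : Cn n) :
  line a b z -> line a b (homot a nu z).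
Proof.
  intros [t ->]; exists (Cmul nu t); apply functional_extensionality; intro i.
  unfold homot, vadd, vscal, vsub; ring.
Qed.

Lemma line_homot_b {n} (a b : Cn n) (nu : Cx) (z : Cn n) :
  line a b z -> line a b (homot b nu z).
Proof.
  intros [t ->]; exists (Cadd (Cmul nu (Csub t Cx1)) Cx1).
  apply functional_extensionality; intro i.
  unfold homot, vadd, vscal, vsub; ring.
Qed.

Lemma orbitG_line {n} (a b : Cn n) (lam mu : Cx) (z w : Cn n) :
  line a b z -> orbitG a b lam mu z w -> line a b w.
Proof.
  intros Hz [h [Hh <-]].
  induction Hh; auto using line_homot_a, line_homot_b.
Qed.

Lemma orbitG1_orbitG {n} (a b : Cn n) (lam mu : Cx) (z w : Cn n) :
  orbitG1 a b lam mu z w -> orbitG a b lam mu z w.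
Proof. intros [h [[Hh _] E]]; exists h; auto. Qed.

Lemma closure_mono {n} (S T : Cn n -> Prop) (w : Cn n) :
  (forall s, S s -> T s) -> closure S w -> closure T w.
Proof.
  intros HST Hw e He; destruct (Hw e He) as [s [Hs Hsw]].
  exists s; auto.
Qed.

Lemma vsub_neq0_coord {n} (a b : Cn n) : a <> b -> exists i, vsub b a i <> Cx0.
Proof.
  intro Hab; apply NNPP; intro Hall; apply Hab.
  apply functional_extensionality; intro i.
  assert (Hi : vsub b a i = Cx0) by (apply NNPP; intro H; apply Hall; exists i; exact H).
  unfold vsub in Hi; replace (b i) with (Cadd (a i) (Csub (b i) (a i))) by ring.
  rewrite Hi; ring.
Qed.

Lemma line_closed {n} (a b : Cn n) (S : Cn n -> Prop) (w : Cn n) :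
  a <> b -> (forall s, S s -> line a b s) -> closure S w -> line a b w.
Proof.
  intros Hab HS Hw.
  set (d := vsub b a).
  destruct (vsub_neq0_coord a b Hab) as [i Hi]; fold d in Hi.
  exists (Cdiv (Csub (w i) (a i)) (d i)).
  apply functional_extensionality; intro j; unfold vadd, vscal; fold d.
  set (r := Cdiv (d j) (d i)).
  assert (Hdist : Csub (w j) (Cadd (a j) (Cmul (Cdiv (Csub (w i) (a i)) (d i)) (d j))) = Cx0).
  2: { replace (w j) with (Cadd (Csub (w j) (Cadd (a j) (Cmul (Cdiv (Csub (w i) (a i)) (d i)) (d j))))
                 (Cadd (a j) (Cmul (Cdiv (Csub (w i) (a i)) (d i)) (d j)))) by ring.
       rewrite Hdist; ring. }
  apply Cmod_eq0; intros e He.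
  pose proof (Cmod_ge0 r) as Hr.
  destruct (Hw (e / (1 + Cmod r)) ltac:(apply Rdiv_lt_0_compat; lra)) as [s [Hs Hsw]].
  destruct (HS s Hs) as [tau Htau].
  (* the defect vanishes on the line, so it is controlled by the distance to [s] *)
  replace (Csub (w j) _) with (Csub (Csub (w j) (s j)) (Cmul (Csub (w i) (s i)) r)).
  2: { rewrite Htau; unfold r, vadd, vscal; fold d; field; exact Hi. }
  eapply Rle_lt_trans; [apply Cmod_add_le |].
  rewrite Cmod_opp, Cmod_mul.
  pose proof (Hsw i); pose proof (Hsw j); pose proof (Cmod_ge0 (Csub (w i) (s i))).
  assert (e / (1 + Cmod r) * (1 + Cmod r) = e) by (field; lra).
  nra.
Qed.

Lemma fin_fun_bounded (n : nat) (f : Fin.t n -> R) : exists M, 0 < M /\ forall j, f j <= M.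
Proof.
  induction n as [| n IHn].
  - exists 1; split; [lra | intro j; apply Fin.case0 with (p := j)].
  - destruct (IHn (fun j => f (Fin.FS j))) as [M [HM Hbound]].
    exists (Rmax M (f Fin.F1)); split.
    + eapply Rlt_le_trans; [exact HM | apply Rmax_l].
    + intro j; apply (Fin.caseS' j (fun j => f j <= Rmax M (f Fin.F1))).
      * apply Rmax_r.
      * intro p; eapply Rle_trans; [apply Hbound | apply Rmax_l].
Qed.

Lemma line_closure_orbitG1 {n} (a b : Cn n) (lam mu : Cx) :
  (forall t e, 0 < e -> exists s, transl_coef a b lam mu s /\ Cmod (Csub t s) < e) ->
  forall z w, line a b z -> line a b w -> closure (orbitG1 a b lam mu z) w.
Proof.
  intros Hdense z w [t0 ->] [t ->] e He.
  destruct (fin_fun_bounded n (fun j => Cmod (vsub b a j))) as [M [HM HMb]].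
  destruct (Hdense (Csub t t0) (e / M) ltac:(apply Rdiv_lt_0_compat; lra))
    as [s [[h [Hh E]] Hs]].
  exists (h (vadd a (vscal t0 (vsub b a)))); split.
  - exists h; split; [split; [exact Hh | exists (vscal s (vsub b a)); exact E] | reflexivity].
  - intro i; rewrite E; unfold vadd, vscal.
    replace (Csub _ _) with (Cmul (Csub (Csub t t0) s) (vsub b a i)) by ring.
    rewrite Cmod_mul.
    specialize (HMb i); simpl in HMb.
    pose proof (Cmod_ge0 (Csub (Csub t t0) s)); pose proof (Cmod_ge0 (vsub b a i)).
    assert (e / M * M = e) by (field; lra).
    nra.
Qed.

Theorem lemma3p1 (n : nat) (lam mu : Cx) (a b : Cn n)
  (Hlam_real : Cim lam <> 0)
  (Hlam_circ : Cmod lam <> 1)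
  (Hmu0 : mu <> Cx0) (Hmu1 : mu <> Cx1)
  (Hab : a <> b) :
  (forall z, line a b z ->
     forall w, closure (orbitG1 a b lam mu z) w <-> line a b w) /\
  (forall z, line a b z ->
     forall w, closure (orbitG a b lam mu z) w <-> line a b w).
Proof.
  pose proof (line_closure_orbitG1 a b lam mu
                (transl_coef_dense a b lam mu Hlam_real Hlam_circ Hmu0 Hmu1)) as Hdense.
  split; intros z Hz w; split; intro Hw.
  - apply (line_closed a b _ w Hab (fun s Hs => orbitG_line a b lam mu z s Hz
                                                  (orbitG1_orbitG a b lam mu z s Hs)) Hw).
  - exact (Hdense z w Hz Hw).
  - exact (line_closed a b _ w Hab (fun s => orbitG_line a b lam mu z s Hz) Hw).
  - exact (closure_mono _ _ w (orbitG1_orbitG a b lam mu z) (Hdense z w Hz Hw)).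
Qed.
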